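(* For every $N\in\mathbb{N}$, setting $n=2^N$, and every $\epsilon>0$, there exists a qubit state $\rho$ (depending on $n$ and $\epsilon$) such that $$M^{(1)}(\rho)<\frac1n\quad\text{and}\quad \frac{M^{(1)}(\sigma_{(m)})}{M^{(1)}(\rho)}>2^{-\epsilon}\sqrt{n}\quad\text{for all } m\ge\log_2 n,$$ where $\sigma_{(m)}$ is the output of the $m$th step of the concatenation protocol applied to $\rho$.
   Context: Qubit basis $\{|0\rangle,|1\rangle\}$ is the eigenbasis of $L=|1\rangle\langle1|$; $M^{(1)}(\sigma):=|\langle0|\sigma|1\rangle|$ (the trace norm of the first mode $|1\rangle\langle1|\sigma|0\rangle\langle0|$). Concatenation protocol: $\sigma_{(0)}=\rho$ and $\sigma_{(m+1)}=\mathrm{tr}_B\big[U_m(\sigma_{(m)}\otimes\sigma_{(m)})U_m^\dagger\big]$, where, with $p^{(m)}_{00}=\langle0|\sigma_{(m)}|0\rangle$, $U_m$ acts as the identity on $|00\rangle,|11\rangle$ and on $\mathrm{span}\{|01\rangle,|10\rangle\}$ as $|01\rangle\mapsto\cos\theta_m|01\rangle+\sin\theta_m|10\rangle$, $|10\rangle\mapsto-\sin\theta_m|01\rangle+\cos\theta_m|10\rangle$ with $\cos\theta_m=1/\sqrt{1+(2p^{(m)}_{00}-1)^2}$, $\sin\theta_m=(2p^{(m)}_{00}-1)/\sqrt{1+(2p^{(m)}_{00}-1)^2}$. Step $m$ consumes $2^m$ copies of $\rho$. *)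

From HB Require Import structures.
From mathcomp Require Import all_boot all_order all_algebra.
From mathcomp Require Import complex.
From mathcomp Require Import Rstruct.
From Stdlib Require Import Rdefinitions Rpower.
Set Implicit Arguments. Unset Strict Implicit. Unset Printing Implicit Defensive.
Import Order.TTheory GRing.Theory Num.Theory.
Local Open Scope ring_scope.

Notation C := (Rdefinitions.R[i]).

Definition k0 : 'I_2 := ord0.
Definition k1 : 'I_2 := ord_max.

Definition adjmx m n (A : 'M[C]_(m, n)) : 'M[C]_(n, m) := (map_mx Num.conj A)^T.

Definition psd (s : 'M[C]_2) : Prop :=
  forall v : 'cV[C]_2, 0 <= (adjmx v *m s *m v) 0 0.
Definition qubit_state (s : 'M[C]_2) : Prop := psd s /\ \tr s = 1.

(* two-qubit operators, indexed by pairs (a,b) <-> |a b>, a = system A, b = system B *)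
Definition op2 := ('I_2 * 'I_2)%type -> ('I_2 * 'I_2)%type -> C.
Definition kron (s t : 'M[C]_2) : op2 := fun i j => s i.1 j.1 * t i.2 j.2.
Definition mul2 (A B : op2) : op2 := fun i j => \sum_(k : 'I_2 * 'I_2) A i k * B k j.
Definition adj2 (A : op2) : op2 := fun i j => Num.conj (A j i).
Definition ptrB (X : op2) : 'M[C]_2 := \matrix_(a, a') \sum_(b : 'I_2) X (a, b) (a', b).

(* the unitary U: identity on |00>,|11>; on span{|01>,|10>}:
   |01> -> c|01> + s|10>,  |10> -> -s|01> + c|10>   (entry U i j = <i|U|j>) *)
Definition Uop (c s : Rdefinitions.R) : op2 := fun i j =>
  if (i == (k0, k0)) && (j == (k0, k0)) then 1
  else if (i == (k1, k1)) && (j == (k1, k1)) then 1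
  else if (i == (k0, k1)) && (j == (k0, k1)) then (c%:C)%C
  else if (i == (k1, k0)) && (j == (k0, k1)) then (s%:C)%C
  else if (i == (k0, k1)) && (j == (k1, k0)) then ((- s)%:C)%C
  else if (i == (k1, k0)) && (j == (k1, k0)) then (c%:C)%C
  else 0.

Definition protocol_step (sigma : 'M[C]_2) : 'M[C]_2 :=
  let p00 := complex.Re (sigma k0 k0) in
  let d := 2 * p00 - 1 in
  let r := Num.sqrt (1 + d ^+ 2) in
  let U := Uop (1 / r) (d / r) in
  ptrB (mul2 (mul2 U (kron sigma sigma)) (adj2 U)).

Definition sigma_m (m : nat) (rho : 'M[C]_2) : 'M[C]_2 := iter m protocol_step rho.

Definition M1 (sigma : 'M[C]_2) : Rdefinitions.R := complex.Re `|sigma k0 k1|.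

(* The protocol preserves the real states (1 + x X + z Z)/2 and acts on
   their Bloch coordinates by (x, z) |-> (x sqrt(1 + z^2), z - z x^2 / (1 + z^2)),
   while M1 = |x| / 2.  Start near the pole, z0 = 1 - t/2, with a tiny coherence x0.
   Each step lowers z by at most x^2 and at most doubles x^2, so during the first N
   steps z stays above 1 - t and every step multiplies x^2 by at least 2 (1 - t).
   Hence x_N^2 >= x0^2 2^N (1 - t)^N >= x0^2 2^N (1 - N t) by Bernoulli's inequality,
   and x keeps growing afterwards; N t < 1 - 2^(-2 eps) gives the bound. *)

From HB Require Import structures.
From mathcomp Require Import all_boot all_order all_algebra.
From mathcomp Require Import complex Rstruct.
From mathcomp Require Import ring lra.
From Stdlib Require Import Rdefinitions Rpower.
Set Implicit Arguments. Unset Strict Implicit. Unset Printing Implicit Defensive.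
Import Order.TTheory GRing.Theory Num.Theory.
Local Open Scope ring_scope.

Definition realsym_mx (u v w : R) : 'M[C]_2 :=
  \matrix_(i, j) (if i == k0 then (if j == k0 then u else w)
                  else (if j == k0 then w else v))%:C%C.
(* Stdlib binds R_scope to the type R; without this, arguments such as (1 + z) / 2
   would be parsed with Rplus and Rdiv instead of the ring operations. *)
Arguments realsym_mx (u v w)%_ring_scope.

Lemma realsym_mx00 (u v w : R) : realsym_mx u v w k0 k0 = u%:C%C.
Proof. by rewrite mxE. Qed.

Lemma realsym_mx01 (u v w : R) : realsym_mx u v w k0 k1 = w%:C%C.
Proof. by rewrite mxE. Qed.

Lemma realsym_mx11 (u v w : R) : realsym_mx u v w k1 k1 = v%:C%C.
Proof. by rewrite mxE. Qed.

Lemma sum_qubit (F : 'I_2 -> C) : \sum_(b : 'I_2) F b = F k0 + F k1.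
Proof. by rewrite big_ord_recl big_ord1; congr (_ + F _); apply/val_inj. Qed.

Lemma sum_qubit_pair (F : 'I_2 * 'I_2 -> C) :
  \sum_(k : 'I_2 * 'I_2) F k = F (k0, k0) + F (k0, k1) + F (k1, k0) + F (k1, k1).
Proof.
transitivity (\sum_(k : 'I_2 * 'I_2) F (k.1, k.2)); first by apply: eq_bigr => -[].
by rewrite -(pair_bigA _ (fun i j => F (i, j))) /= !sum_qubit addrA.
Qed.

Lemma qubit_index_cases (i : 'I_2) : i = k0 \/ i = k1.
Proof. by case: i => [[|[|//]] ?]; [left|right]; apply/val_inj. Qed.

Lemma conj_realC (x : R) : Num.conj (x%:C%C : C) = x%:C%C.
Proof. exact: conjc_real. Qed.

Lemma ptrB_Uop_realsym (a s u v w : R) :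
  ptrB (mul2 (mul2 (Uop a s) (kron (realsym_mx u v w) (realsym_mx u v w)))
             (adj2 (Uop a s))) =
  realsym_mx (u ^+ 2 + (a ^+ 2 + s ^+ 2) * u * v - 2 * a * s * w ^+ 2)
             (v ^+ 2 + (a ^+ 2 + s ^+ 2) * u * v + 2 * a * s * w ^+ 2)
             (w * (a * (u + v) + s * (u - v))).
Proof.
apply/matrixP => i j; rewrite /ptrB !mxE sum_qubit /mul2 !sum_qubit_pair.
rewrite /adj2 /kron /Uop /realsym_mx.
by case: (qubit_index_cases i) => ->; case: (qubit_index_cases j) => ->;
  rewrite !mxE /= ?conj_realC
    ?(rmorph0, rmorph1, rmorphD, rmorphB, rmorphM, rmorphN, rmorphXn); ring.
Qed.

Lemma psd_realsym (u v w : R) : 0 <= u -> 0 <= v -> w ^+ 2 <= u * v ->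
  psd (realsym_mx u v w).
Proof.
move=> u_ge0 v_ge0 w2_le y.
rewrite /adjmx mxE sum_qubit !mxE !sum_qubit !mxE /=.
case: (y k0 0) => a b; case: (y k1 0) => e f.
rewrite -!complexr0; simpc.
apply/andP; split; first by apply/eqP; ring.
set Q := (X in 0 <= X).
have uQ : u * Q = (u * a + w * e) ^+ 2 + (u * b + w * f) ^+ 2
                  + (u * v - w ^+ 2) * (e ^+ 2 + f ^+ 2) by rewrite /Q; ring.
have [u_gt0|u0] := boolP (0 < u).
  rewrite -(pmulr_rge0 _ u_gt0) uQ.
  by rewrite !addr_ge0 ?sqr_ge0 // mulr_ge0 ?subr_ge0 // addr_ge0 ?sqr_ge0.
have {}u0 : u = 0 by apply/eqP; rewrite eq_le u_ge0 andbT leNgt.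
have w0 : w = 0.
  by apply/eqP; rewrite -sqrf_eq0 eq_le sqr_ge0 andbT; move: w2_le; rewrite u0 mul0r.
have -> : Q = v * (e ^+ 2 + f ^+ 2) by rewrite /Q u0 w0; ring.
by rewrite mulr_ge0 // addr_ge0 ?sqr_ge0.
Qed.

(* The state with real Bloch vector (v.1, 0, v.2). *)
Definition bloch_mx (v : R * R) : 'M[C]_2 :=
  realsym_mx ((1 + v.2) / 2) ((1 - v.2) / 2) (v.1 / 2).

Lemma bloch_qubit_state (v : R * R) :
  v.1 ^+ 2 + v.2 ^+ 2 <= 1 -> qubit_state (bloch_mx v).
Proof.
move=> v_le1; have := sqr_ge0 v.1; split.
  by apply: psd_realsym; nra.
rewrite /mxtrace sum_qubit realsym_mx00 realsym_mx11 -rmorphD.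
have -> : (1 + v.2) / 2 + (1 - v.2) / 2 = 1 by field.
exact: rmorph1.
Qed.

Lemma Re_norm_realC (y : R) : complex.Re `|y%:C%C| = `|y|.
Proof. by rewrite normc_def /= expr0n addr0 sqrtr_sqr. Qed.

Lemma M1_bloch (v : R * R) : M1 (bloch_mx v) = `|v.1| / 2.
Proof.
by rewrite /M1 realsym_mx01 Re_norm_realC normf_div [`|2|]ger0_norm.
Qed.

Lemma ptrB_Uop_bloch (a s : R) (v : R * R) : a ^+ 2 + s ^+ 2 = 1 ->
  ptrB (mul2 (mul2 (Uop a s) (kron (bloch_mx v) (bloch_mx v))) (adj2 (Uop a s))) =
  bloch_mx (v.1 * (a + s * v.2), v.2 - a * s * v.1 ^+ 2).
Proof.
by move=> rot; rewrite ptrB_Uop_realsym rot; congr realsym_mx; cbn [fst snd]; field.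
Qed.

Definition concat_bloch (v : R * R) : R * R :=
  (v.1 * Num.sqrt (1 + v.2 ^+ 2), v.2 - v.2 * v.1 ^+ 2 / (1 + v.2 ^+ 2)).

Lemma Re_bloch_mx00 (v : R * R) : complex.Re (bloch_mx v k0 k0) = (1 + v.2) / 2.
Proof. by rewrite realsym_mx00. Qed.

Lemma protocol_step_bloch (v : R * R) :
  protocol_step (bloch_mx v) = bloch_mx (concat_bloch v).
Proof.
rewrite /protocol_step /concat_bloch; cbv zeta; rewrite Re_bloch_mx00.
have -> : 2 * ((1 + v.2) / 2) - 1 = v.2 by field.
set r := Num.sqrt _.
have z2_gt0 : 0 < 1 + v.2 ^+ 2 by rewrite ltr_pwDl ?sqr_ge0.
have r2 : r ^+ 2 = 1 + v.2 ^+ 2 by rewrite sqr_sqrtr ?ltW.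
have r_neq0 : r != 0 by rewrite sqrtr_eq0 -ltNge.
have rot : (1 / r) ^+ 2 + (v.2 / r) ^+ 2 = 1.
  transitivity ((1 + v.2 ^+ 2) / r ^+ 2); first by field.
  by rewrite -r2 divff // expf_neq0.
change (Rdefinitions.Rdiv 1 r) with (1 / r).
change (Rdefinitions.Rdiv v.2 r) with (v.2 / r).
rewrite ptrB_Uop_bloch //.
have -> : v.1 * r = v.1 * r ^+ 2 / r by field.
by congr (bloch_mx (_, _)); [rewrite r2 | rewrite -r2]; field.
Qed.

Lemma sigma_m_bloch (m : nat) (v : R * R) :
  sigma_m m (bloch_mx v) = bloch_mx (iter m concat_bloch v).
Proof.
by elim: m => [|m IH] //; rewrite /sigma_m !iterS -/(sigma_m m _) IH protocol_step_bloch.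
Qed.

Lemma bernoulli_ineq (D : realDomainType) (h : D) (n : nat) :
  -1 <= h -> 1 + n%:R * h <= (1 + h) ^+ n.
Proof.
move=> h_ge; elim: n => [|n IH]; first by rewrite mul0r addr0 expr0.
have n_ge0 : (0 : D) <= n%:R by rewrite ler0n.
have h1_ge0 : 0 <= 1 + h by rewrite -lerBlDl sub0r.
rewrite exprSr -natr1.
apply: le_trans (ler_wpM2r h1_ge0 IH).
have := sqr_ge0 h; nra.
Qed.

Lemma concat_bloch_x2 (v : R * R) :
  (concat_bloch v).1 ^+ 2 = v.1 ^+ 2 * (1 + v.2 ^+ 2).
Proof. by rewrite exprMn sqr_sqrtr // addr_ge0 ?sqr_ge0. Qed.

Lemma concat_bloch_x_ge (v : R * R) : 0 <= v.1 -> v.1 <= (concat_bloch v).1.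
Proof.
move=> x_ge0; rewrite ler_peMr // -[leLHS]sqrtr1 ler_sqrt ?ler_wpDr ?sqr_ge0 //.
Qed.

Lemma concat_bloch_z_bounds (v : R * R) : 0 <= v.2 ->
  v.2 - v.1 ^+ 2 <= (concat_bloch v).2 <= v.2.
Proof.
move=> z_ge0; have z2_gt0 : 0 < 1 + v.2 ^+ 2 by rewrite ltr_pwDl ?sqr_ge0.
have x2_ge0 := sqr_ge0 v.1.
rewrite /concat_bloch; cbn [snd]; rewrite lerD2l lerN2 gerBl; apply/andP; split.
  rewrite ler_pdivrMr //.
  have := mulr_ge0 x2_ge0 (sqr_ge0 (v.2 - 1)); have := mulr_ge0 z_ge0 x2_ge0; nra.
exact: divr_ge0 (mulr_ge0 z_ge0 x2_ge0) (ltW z2_gt0).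
Qed.

Lemma iter_concat_bloch_x_nondecreasing (v : R * R) : 0 <= v.1 ->
  forall n m : nat, leq n m -> (iter n concat_bloch v).1 <= (iter m concat_bloch v).1.
Proof.
move=> x_ge0.
have x_ge k : 0 <= (iter k concat_bloch v).1.
  by elim: k => // k IH; rewrite iterS; apply: le_trans IH (concat_bloch_x_ge IH).
move=> n m /subnK <-; elim: (m - n)%nat => // k IH.
by rewrite addSn iterS; apply: le_trans IH (concat_bloch_x_ge (x_ge _)).
Qed.

Lemma iter_concat_bloch_near_pole (t : R) (N : nat) (v : R * R) :
  t <= 1 -> 0 <= v.1 -> v.2 <= 1 -> 1 - t <= v.2 - v.1 ^+ 2 * 2 ^+ N ->
  forall j : nat, leq j N ->
  (iter j concat_bloch v).1 ^+ 2 <= v.1 ^+ 2 * 2 ^+ j /\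
  v.2 - v.1 ^+ 2 * (2 ^+ j - 1) <= (iter j concat_bloch v).2 <= v.2.
Proof.
move=> t_le1 x_ge0 z_le1 z_near_pole; have x2_ge0 := sqr_ge0 v.1.
elim=> [_|j IH ltjN]; first by rewrite expr0 mulr1 subrr mulr0 subr0 !lexx.
have [x2_le /andP[z_ge z_le]] := IH (ltnW ltjN).
have pow_le : v.1 ^+ 2 * 2 ^+ j <= v.1 ^+ 2 * 2 ^+ N.
  by rewrite ler_wpM2l //; apply: ler_weXn2l; [rewrite ler1n | exact: ltnW].
have z_ge0 : 0 <= (iter j concat_bloch v).2 by lra.
have /andP[z'_ge z'_le] := concat_bloch_z_bounds z_ge0.
have z2_le1 : 0 <= 1 - (iter j concat_bloch v).2 ^+ 2 by nra.
have := mulr_ge0 (sqr_ge0 (iter j concat_bloch v).1) z2_le1.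
rewrite iterS concat_bloch_x2 [2 ^+ j.+1]exprS; split; first nra.
by apply/andP; split; lra.
Qed.

Lemma iter_concat_bloch_x2_ge (t : R) (N : nat) (v : R * R) :
  t <= 1 -> 0 <= v.1 -> v.2 <= 1 -> 1 - t <= v.2 - v.1 ^+ 2 * 2 ^+ N ->
  forall j : nat, leq j N ->
  v.1 ^+ 2 * (2 * (1 - t)) ^+ j <= (iter j concat_bloch v).1 ^+ 2.
Proof.
move=> t_le1 x_ge0 z_le1 z_near_pole.
have near_pole := iter_concat_bloch_near_pole t_le1 x_ge0 z_le1 z_near_pole.
elim=> [_|j IH ltjN]; first by rewrite expr0 mulr1.
have [_ /andP[z_ge _]] := near_pole _ (ltnW ltjN).
have pow_le : v.1 ^+ 2 * 2 ^+ j <= v.1 ^+ 2 * 2 ^+ N.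
  by rewrite ler_wpM2l ?sqr_ge0 //; apply: ler_weXn2l; [rewrite ler1n | exact: ltnW].
have z_ge' : 1 - t <= (iter j concat_bloch v).2 by have := sqr_ge0 v.1; lra.
have factor_le : 2 * (1 - t) <= 1 + (iter j concat_bloch v).2 ^+ 2.
  have := sqr_ge0 t; nra.
have factor_ge0 : 0 <= 2 * (1 - t) by rewrite mulr_ge0 // subr_ge0.
rewrite iterS concat_bloch_x2 [(2 * (1 - t)) ^+ j.+1]exprS mulrCA.
apply: le_trans (ler_wpM2l factor_ge0 (IH (ltnW ltjN))) _.
by rewrite mulrC ler_wpM2l ?sqr_ge0.
Qed.

Lemma iter_concat_bloch_amplifies (th t : R) (N : nat) (v : R * R) :
  0 <= th -> th ^+ 2 < 1 - N%:R * t ->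
  t <= 1 -> 0 < v.1 -> v.2 <= 1 -> 1 - t <= v.2 - v.1 ^+ 2 * 2 ^+ N ->
  forall m : nat, leq N m -> th * Num.sqrt (2 ^+ N) * v.1 < (iter m concat_bloch v).1.
Proof.
move=> th_ge0 th2_lt t_le1 x_gt0 z_le1 z_near_pole m leNm.
have x_ge0 := ltW x_gt0.
apply: lt_le_trans _ (iter_concat_bloch_x_nondecreasing x_ge0 leNm).
have xN2_ge := iter_concat_bloch_x2_ge t_le1 x_ge0 z_le1 z_near_pole (leqnn N).
have bernoulli : 1 - N%:R * t <= (1 - t) ^+ N.
  by rewrite -mulrN bernoulli_ineq // lerN2.
have xN_ge0 : 0 <= (iter N concat_bloch v).1.
  exact: le_trans x_ge0 (iter_concat_bloch_x_nondecreasing x_ge0 (leq0n N)).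
rewrite -ltr_sqr ?nnegrE ?mulr_ge0 ?sqrtr_ge0 //.
apply: lt_le_trans _ xN2_ge.
rewrite !exprMn sqr_sqrtr ?exprn_ge0 //.
have -> : th ^+ 2 * 2 ^+ N * v.1 ^+ 2 = v.1 ^+ 2 * 2 ^+ N * th ^+ 2 by ring.
rewrite [_ * (2 ^+ N * _)]mulrA ltr_pM2l ?mulr_gt0 ?exprn_gt0 //.
exact: lt_le_trans th2_lt bernoulli.
Qed.

Lemma concat_protocol_amplifies_coherence (N : nat) (th : R) : 0 <= th < 1 ->
  exists rho : 'M[C]_2,
    qubit_state rho /\
    M1 rho < 1 / (expn 2 N)%:R /\
    (forall m : nat, leq N m ->
       M1 (sigma_m m rho) / M1 rho > th * Num.sqrt ((expn 2 N)%:R)).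
Proof.
move=> /andP[th_ge0 th_lt1].
rewrite natrX.
have pow_ge1 : 1 <= 2 ^+ N :> R by rewrite exprn_ege1 // ler1n.
have N1_gt0 : 0 < N.+1%:R :> R by rewrite ltr0n.
set t := (1 - th ^+ 2) / N.+1%:R.
have t_gt0 : 0 < t by rewrite divr_gt0 // subr_gt0 expr_lt1.
have th2_lt : th ^+ 2 < 1 - N%:R * t.
  have : t * N.+1%:R = 1 - th ^+ 2 by rewrite divfK ?gt_eqF.
  rewrite -natr1; lra.
have t_le1 : t <= 1.
  rewrite ler_pdivrMr // mul1r.
  have := ler0n R N; rewrite -natr1; have := sqr_ge0 th; lra.
set x0 := t / (2 * 2 ^+ N); set z0 := 1 - t / 2.
have pow_gt0 : 0 < 2 ^+ N :> R by rewrite exprn_gt0.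
have x0_gt0 : 0 < x0 by rewrite divr_gt0 // mulr_gt0.
have x0_pow : x0 * 2 ^+ N = t / 2 by rewrite /x0; field; rewrite gt_eqF.
have x0_le : x0 <= t / 2 by rewrite -x0_pow ler_peMr // ltW.
have z_near_pole : 1 - t <= z0 - x0 ^+ 2 * 2 ^+ N.
  rewrite expr2 -mulrA x0_pow /z0; nra.
exists (bloch_mx (x0, z0)); split; [|split].
- by apply: bloch_qubit_state; change (x0 ^+ 2 + z0 ^+ 2 <= 1); rewrite /z0; nra.
- by rewrite M1_bloch gtr0_norm // ltr_pdivlMr // mulrAC x0_pow; lra.
move=> m leNm; rewrite sigma_m_bloch !M1_bloch.
have z0_le1 : z0 <= 1 by rewrite /z0 gerBl divr_ge0 // ltW.
have := iter_concat_bloch_amplifies (v := (x0, z0))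
  th_ge0 th2_lt t_le1 x0_gt0 z0_le1 z_near_pole leNm.
change (x0, z0).1 with x0; set xm := (iter m _ _).1 => amplified.
have xm_gt0 : 0 < xm.
  exact: le_lt_trans (mulr_ge0 (mulr_ge0 th_ge0 (sqrtr_ge0 _)) (ltW x0_gt0)) amplified.
have -> : `|xm| / 2 / (`|x0| / 2) = xm / x0.
  by rewrite !gtr0_norm //; field; rewrite gt_eqF.
by rewrite ltr_pdivlMr.
Qed.

Lemma Rpower_opp_bounds (x y : R) : 1 < x -> 0 < y -> 0 < Rpower x (- y) < 1.
Proof.
move=> x_gt1 y_gt0; have x_gt0 := lt_trans ltr01 x_gt1.
apply/andP; split; apply/RltP; first exact: Exp_prop.exp_pos.
have -> : 1 = Rpower x 0 by rewrite Rpower_O //; apply/RltP.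
by apply: Rpower_lt; apply/RltP; rewrite // oppr_lt0.
Qed.

Theorem mainTheorem4 :
  forall (N : nat) (eps : Rdefinitions.R), 0 < eps ->
  exists rho : 'M[C]_2,
    qubit_state rho /\
    M1 rho < 1 / (expn 2 N)%:R /\
    (forall m : nat, leq N m ->
       M1 (sigma_m m rho) / M1 rho > Rpower 2 (- eps) * Num.sqrt ((expn 2 N)%:R)).
Proof.
move=> N eps eps_gt0.
have two_gt1 : 1 < 2 :> R by rewrite ltr1n.
have /andP[th_gt0 th_lt1] := Rpower_opp_bounds two_gt1 eps_gt0.
by apply: concat_protocol_amplifies_coherence; rewrite ltW.
Qed.
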